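(* In the basic hexagonal model, for a cell $c$ with set of direct neighbours $\mathcal{N}_c$, given the ignition times $\tau(n)$ for all $n\in\mathcal{N}_c$ (together with the initial values $x(c,0)$ and $y(n,0)$), the ignition time $\tau(c)$ can be calculated in constant time.
   Context: Basic hexagonal model: cells are hexagons, each with at most $6$ direct neighbours (cells sharing an edge). The state of cell $c$ at time $t\in\mathbb{N}$ is a pair of non-negative integers $x(c,t)$, $y(c,t)$; $c$ is burning if $x(c,t)=0<y(c,t)$, alive if $x(c,t),y(c,t)>0$, dead if $y(c,t)=0$. Transition: an alive cell's $x$-value decreases by the number of burning neighbours (clipped at $0$); a burning cell's $y$-value decreases by $1$. The ignition time $\tau(c)\in\mathbb{N}\cup\{\infty\}$ is the minimum $t$ with $x(c,t)=0$ ($\infty$ if none); it satisfies $\tau(c)=\min\{t\in\mathbb{N}: x(c,0)\le\sum_{n\in\mathcal{N}_c}\max(0,\min(t-\tau(n),y(n,0)))\}$, with $\tau(c)=\infty$ if this set is empty. Arithmetic operations on numbers take constant time. *)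

From mathcomp Require Import all_boot.
Set Implicit Arguments. Unset Strict Implicit. Unset Printing Implicit Defensive.

(* A cell c has k direct neighbours (k <= 6), indexed by 'I_k.         *)
(*   x      = x(c,0)                                                   *)
(*   y i    = y(n_i,0)                                                 *)
(*   tau i  = tau(n_i), None standing for infinity                     *)
(*   max(0, min(t - tau i, y i))  (= 0 if tau i = infinity);           *)
(* with truncated nat subtraction, max(0, min(t - s, y)) = minn (t-s) y*)

Definition contrib (k : nat) (y : 'I_k -> nat) (tau : 'I_k -> option nat)
  (t : nat) (i : 'I_k) : nat :=
  match tau i with
  | None => 0
  | Some s => minn (t - s) (y i)
  end.

Definition burnt (k : nat) (y : 'I_k -> nat) (tau : 'I_k -> option nat)
  (t : nat) : nat := \sum_(i < k) contrib y tau t i.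

Definition is_ignition_time (k : nat) (x : nat) (y : 'I_k -> nat)
  (tau : 'I_k -> option nat) (r : option nat) : Prop :=
  match r with
  | Some t => x <= burnt y tau t /\ (forall t', x <= burnt y tau t' -> t <= t')
  | None => forall t, burnt y tau t < x
  end.

(* Constant-time computation: a loop-free program (arithmetic          *)
(* expression with conditionals) over the inputs.  Each constructor is *)
(* one constant-time arithmetic operation / comparison, and a fixed     *)
(* program is evaluated with a number of operations bounded by its      *)
(* size, independently of the input values.                             *)

(* Input variables: x(c,0); for each neighbour i, the (finite part of)
   tau(n_i) (0 if infinite), y(n_i,0), and an infinity flag (1 if
   tau(n_i) = infinity, 0 otherwise). *)
Inductive var (k : nat) : Type :=
| VX : var k
| VTau : 'I_k -> var k
| VY : 'I_k -> var k
| VInf : 'I_k -> var k.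

Inductive aexp (k : nat) : Type :=
| AVar : var k -> aexp k
| AConst : nat -> aexp k
| AAdd : aexp k -> aexp k -> aexp k
| ASub : aexp k -> aexp k -> aexp k      (* truncated subtraction *)
| AMul : aexp k -> aexp k -> aexp k
| ADiv : aexp k -> aexp k -> aexp k      (* Euclidean quotient, m %/ 0 = 0 *)
| AMod : aexp k -> aexp k -> aexp k
| AIf : bexp k -> aexp k -> aexp k -> aexp k
with bexp (k : nat) : Type :=
| BTrue : bexp k
| BLe : aexp k -> aexp k -> bexp k
| BEq : aexp k -> aexp k -> bexp k
| BNot : bexp k -> bexp k
| BAnd : bexp k -> bexp k -> bexp k
| BOr : bexp k -> bexp k -> bexp k.

Definition env_of (k : nat) (x : nat) (y : 'I_k -> nat)
  (tau : 'I_k -> option nat) (v : var k) : nat :=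
  match v with
  | VX => x
  | VTau i => if tau i is Some s then s else 0
  | VY i => y i
  | VInf i => if tau i is Some _ then 0 else 1
  end.

Fixpoint aeval (k : nat) (env : var k -> nat) (e : aexp k) : nat :=
  match e with
  | AVar v => env v
  | AConst n => n
  | AAdd a b => aeval env a + aeval env b
  | ASub a b => aeval env a - aeval env b
  | AMul a b => aeval env a * aeval env b
  | ADiv a b => aeval env a %/ aeval env b
  | AMod a b => aeval env a %% aeval env b
  | AIf c a b => if beval env c then aeval env a else aeval env b
  end
with beval (k : nat) (env : var k -> nat) (e : bexp k) : bool :=
  match e with
  | BTrue => true
  | BLe a b => aeval env a <= aeval env b
  | BEq a b => aeval env a == aeval env b
  | BNot c => ~~ beval env c
  | BAnd c d => beval env c && beval env d
  | BOr c d => beval env c || beval env d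
  end.

Record prog (k : nat) : Type := Prog { p_inf : bexp k ; p_val : aexp k }.

Definition run (k : nat) (P : prog k) (x : nat) (y : 'I_k -> nat)
  (tau : 'I_k -> option nat) : option nat :=
  let env := env_of x y tau in
  if beval env (p_inf P) then None else Some (aeval env (p_val P)).

From mathcomp Require Import all_boot.
From mathcomp Require Import zify.
Set Implicit Arguments. Unset Strict Implicit. Unset Printing Implicit Defensive.

(* The burnt amount f(t) = \sum_n min(t - tau(n), y(n)) is nondecreasing and
   piecewise linear in t, with breakpoints among 0, tau(n) and tau(n) + y(n).
   If f(t) >= x and p is the last breakpoint <= t, then f is affine on [p, t],
   so f first reaches x at p + ceil((x - f(p)) / slope) <= t.  Hence tau(c) is
   the least of these at most 2k + 1 candidates that actually reach x, and it
   is infinite iff x exceeds f at the horizon \sum_n (tau(n) + y(n)), beyond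
   which f is constant.  For k <= 6 this is a fixed loop-free program. *)

Definition ceildiv (m d : nat) : nat := (m + d - 1) %/ d.

Lemma ceildiv_leq m d n : m <= d * n -> ceildiv m d <= n.
Proof.
rewrite /ceildiv; case: (posnP d) => [-> | d_gt0 le_m_dn]; first by rewrite divn0.
by rewrite -ltnS ltn_divLR // mulSn; lia.
Qed.

(* The hypothesis only matters for d = 0, where ceildiv m 0 = 0. *)
Lemma leq_mul_ceildiv m d n : m <= d * n -> m <= d * ceildiv m d.
Proof.
case: (posnP d) => [-> | d_gt0 _]; first by rewrite mul0n.
have := ltn_ceil (m + d - 1) d_gt0; rewrite /ceildiv mulSn; lia.
Qed.

Lemma minn_if m n : minn m n = if m <= n then m else n.
Proof. by case: leqP => [/minn_idPl | /ltnW /minn_idPr]. Qed.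

Lemma bigmax_id_mem (r : seq nat) (P : pred nat) :
  0 \in r -> \max_(i <- r | P i) i \in r.
Proof.
move=> r0; rewrite big_seq_cond; elim/big_ind: _ => // [m n|i /andP[] //].
by rewrite /maxn; case: ifP.
Qed.

Lemma foldr_minn_mem (h : nat) (l : seq nat) : foldr minn h l \in h :: l.
Proof.
elim: l => [|a l IHl] /=; first exact: mem_head.
rewrite /minn; case: ifP => _; first by rewrite !inE eqxx orbT.
by move: IHl; rewrite !inE => /orP[-> | ->]; rewrite ?orbT.
Qed.

Lemma foldr_minn_leq (h : nat) (l : seq nat) w : w \in h :: l -> foldr minn h l <= w.
Proof.
elim: l => [|a l IHl] /=; first by rewrite inE => /eqP ->.
rewrite !inE geq_min => /or3P[w_h | /eqP -> | w_l].
- by rewrite IHl ?inE ?w_h ?orbT.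
- by rewrite leqnn.
- by rewrite IHl ?inE ?w_l ?orbT.
Qed.

Lemma minn_subn_affine s d p t :
  p <= t -> (s < t -> s <= p) -> (s + d < t -> s + d <= p) ->
  minn (t - s) d = minn (p - s) d + (s <= p < s + d) * (t - p).
Proof. by case: (s <= p < s + d) / andP; lia. Qed.

Section Semantics.

Variables (k x : nat) (y : 'I_k -> nat) (tau : 'I_k -> option nat).

Local Notation f := (burnt y tau).

Definition start (i : 'I_k) : nat := odflt 0 (tau i).

Definition horizon : nat := \sum_(i < k) (start i + y i).

(* An infinite neighbour adds the spurious breakpoints 0 and y i, which are harmless. *)
Definition breakpoints : seq nat :=
  0 :: flatten [seq [:: start i; start i + y i] | i <- index_enum 'I_k].

Definition slope (t : nat) : nat :=
  \sum_(i < k) if tau i is Some s then (s <= t < s + y i : nat) else 0.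

Definition candidate (p : nat) : nat := p + ceildiv (x - f p) (slope p).

Definition checked_candidate (p : nat) : nat :=
  if x <= f (candidate p) then candidate p else horizon.

Definition ignition_time : option nat :=
  if x <= f horizon then Some (foldr minn horizon (map checked_candidate breakpoints))
  else None.

Lemma burnt_leq_horizon t : f t <= f horizon.
Proof.
apply: leq_sum => i _; rewrite /contrib.
case tau_i: (tau i) => [s|] //.
have : s + y i <= horizon by rewrite /horizon (bigD1 i) //= /start tau_i leq_addr.
lia.
Qed.

Lemma burnt_affine p t :
  p <= t -> (forall q, q \in breakpoints -> q < t -> q <= p) ->
  f t = f p + slope p * (t - p).
Proof.
move=> le_pt last_p; rewrite /burnt /slope big_distrl -big_split /=.
apply: eq_bigr => i _; rewrite /contrib; case tau_i: (tau i) => [s|] //.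
have in_bp : {subset [:: s; s + y i] <= breakpoints}.
  move=> q q_i; rewrite inE; apply/orP; right; apply/flatten_mapP.
  by exists i; rewrite ?mem_index_enum // /start tau_i.
apply: minn_subn_affine => //; apply: last_p; apply: in_bp.
  by rewrite mem_head.
by rewrite !inE eqxx orbT.
Qed.

Lemma candidate_leq t :
  x <= f t -> exists2 p, p \in breakpoints & x <= f (candidate p) /\ candidate p <= t.
Proof.
move=> reach_t; set p := \max_(q <- breakpoints | q <= t) q.
have p_bp : p \in breakpoints by apply: bigmax_id_mem; rewrite mem_head.
have le_pt : p <= t by apply/bigmax_leqP_seq.
have f_affine u : p <= u <= t -> f u = f p + slope p * (u - p).
  case/andP=> le_pu le_ut; apply: burnt_affine => // q q_bp lt_qu.
  by apply: leq_bigmax_seq => //; apply: leq_trans (ltnW lt_qu) le_ut.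
have gap_le : x - f p <= slope p * (t - p).
  by rewrite leq_subLR -f_affine ?le_pt ?leqnn.
have le_ct : candidate p <= t by rewrite /candidate -leq_subRL // ceildiv_leq.
exists p => //; split => //.
rewrite f_affine ?le_ct ?leq_addr // addKn -leq_subLR.
exact: leq_mul_ceildiv gap_le.
Qed.

Lemma ignition_timeP : is_ignition_time x y tau ignition_time.
Proof.
rewrite /ignition_time; case: ifPn => [reach_h | ]; last first.
  by rewrite -ltnNge => lt_h t; apply: leq_ltn_trans (burnt_leq_horizon t) lt_h.
have checked_reach q : q \in horizon :: map checked_candidate breakpoints -> x <= f q.
  by rewrite inE => /orP[/eqP -> // | /mapP[p _ ->]]; rewrite /checked_candidate; case: ifP.
split; first exact/checked_reach/foldr_minn_mem.
move=> t /candidate_leq[p p_bp [reach_c le_ct]].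
have checked_c : checked_candidate p = candidate p by rewrite /checked_candidate reach_c.
by apply: leq_trans le_ct; rewrite -checked_c foldr_minn_leq // inE map_f ?orbT.
Qed.

End Semantics.

Section Program.

Variable k : nat.

Local Notation "# n" := (AConst k n) (at level 0, format "# n").
Local Notation x_ := (AVar (@VX k)).
Local Notation tau_ i := (AVar (VTau i)).
Local Notation y_ i := (AVar (VY i)).

Definition amin (a b : aexp k) : aexp k := AIf (BLe a b) a b.

Definition asum (e : 'I_k -> aexp k) : aexp k :=
  foldr (fun i acc => AAdd (e i) acc) #0 (index_enum 'I_k).

(* The variable VTau i reads 0 when tau i is infinite, hence this guard. *)
Definition finite_exp (i : 'I_k) : bexp k := BEq (AVar (VInf i)) #0.

Definition burnt_exp (t : aexp k) : aexp k :=
  asum (fun i => AIf (finite_exp i) (amin (ASub t (tau_ i)) (y_ i)) #0).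

Definition slope_exp (t : aexp k) : aexp k :=
  asum (fun i => AIf (BAnd (finite_exp i)
                       (BAnd (BLe (tau_ i) t) (BNot (BLe (AAdd (tau_ i) (y_ i)) t))))
                   #1 #0).

Definition ceildiv_exp (m d : aexp k) : aexp k := ADiv (ASub (AAdd m d) #1) d.

Definition candidate_exp (p : aexp k) : aexp k :=
  AAdd p (ceildiv_exp (ASub x_ (burnt_exp p)) (slope_exp p)).

Definition horizon_exp : aexp k := asum (fun i => AAdd (tau_ i) (y_ i)).

Definition breakpoints_exp : seq (aexp k) :=
  #0 :: flatten [seq [:: tau_ i; AAdd (tau_ i) (y_ i)] | i <- index_enum 'I_k].

Definition checked_candidate_exp (p : aexp k) : aexp k :=
  AIf (BLe x_ (burnt_exp (candidate_exp p))) (candidate_exp p) horizon_exp.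

Definition ignition_prog : prog k :=
  Prog (BNot (BLe x_ (burnt_exp horizon_exp)))
       (foldr amin horizon_exp (map checked_candidate_exp breakpoints_exp)).

Lemma aeval_amin env a b : aeval env (amin a b) = minn (aeval env a) (aeval env b).
Proof. by rewrite minn_if. Qed.

Lemma aeval_asum env e : aeval env (asum e) = \sum_(i < k) aeval env (e i).
Proof. by rewrite /asum unlock; elim: (index_enum 'I_k) => [|i r /= ->]. Qed.

Lemma aeval_foldr_amin env h l :
  aeval env (foldr amin h l) = foldr minn (aeval env h) (map (aeval env) l).
Proof. by elim: l => [|a l IHl] //=; rewrite -IHl -aeval_amin. Qed.

Variables (x : nat) (y : 'I_k -> nat) (tau : 'I_k -> option nat).

Local Notation env := (env_of x y tau).

Lemma aeval_burnt_exp t : aeval env (burnt_exp t) = burnt y tau (aeval env t).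
Proof.
rewrite aeval_asum; apply: eq_bigr => i _ /=; rewrite /contrib.
by case: (tau i) => [s|] //=; rewrite minn_if.
Qed.

Lemma aeval_slope_exp t : aeval env (slope_exp t) = slope y tau (aeval env t).
Proof.
rewrite aeval_asum; apply: eq_bigr => i _ /=.
by case: (tau i) => [s|] //=; rewrite -ltnNge.
Qed.

Lemma aeval_candidate_exp p :
  aeval env (candidate_exp p) = candidate x y tau (aeval env p).
Proof. by rewrite /= aeval_burnt_exp aeval_slope_exp. Qed.

Lemma aeval_horizon_exp : aeval env horizon_exp = horizon y tau.
Proof. by rewrite aeval_asum. Qed.

Lemma aeval_checked_candidate_exp p :
  aeval env (checked_candidate_exp p) = checked_candidate x y tau (aeval env p).
Proof.
rewrite /checked_candidate_exp; cbn [aeval beval].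
by rewrite aeval_burnt_exp aeval_candidate_exp aeval_horizon_exp.
Qed.

Lemma map_aeval_breakpoints_exp :
  map (aeval env) breakpoints_exp = breakpoints y tau.
Proof. by rewrite /= map_flatten -map_comp. Qed.

Lemma run_ignition_prog : run ignition_prog x y tau = ignition_time x y tau.
Proof.
rewrite /run /ignition_time /ignition_prog; cbn [p_inf p_val beval aeval].
rewrite aeval_burnt_exp aeval_foldr_amin aeval_horizon_exp -map_comp.
rewrite (eq_map aeval_checked_candidate_exp) map_comp map_aeval_breakpoints_exp.
by rewrite if_neg.
Qed.

End Program.

Theorem lemma4 :
  forall k : nat, k <= 6 ->
  exists P : prog k,
    forall (x : nat) (y : 'I_k -> nat) (tau : 'I_k -> option nat),
      is_ignition_time x y tau (run P x y tau).
Proof.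
(* The program works for every k; k <= 6 only bounds its size by a constant. *)
move=> k _; exists (ignition_prog k) => x y tau.
rewrite run_ignition_prog; exact: ignition_timeP.
Qed.
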